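(* Let $3\leq m\leq n$, $\ell=m-1$, $p=(m-1)n$. Then $\mathfrak{M}\subset\mathfrak{S}$.
   Context: $E_n$ is the $n\times n$ identity. $\mathfrak{M}$ is the set of $Y=(Y_1;\ldots;Y_\ell)\in\mathbb{R}^{n\times n\times\ell}$ (slices $Y_k$ are $n\times n$ matrices) for which there exist a real $m\times p$ matrix $(x_{ij})$ and a real $n\times p$ matrix $A=(\mathbf{a}_1,\ldots,\mathbf{a}_p)$ such that $(x_{1j}Y_1+\cdots+x_{\ell j}Y_\ell-x_{mj}E_n)\mathbf{a}_j=\mathbf{0}$ for $1\leq j\leq p$ and $B=\begin{pmatrix}AD_1\\ \vdots\\ AD_\ell\end{pmatrix}$ is nonsingular, where $D_k=\operatorname{diag}(x_{k1},\ldots,x_{kp})$. For such $Y$, $V(Y)=\{\mathbf{a}\in\mathbb{R}^n\mid \sum_{k=1}^\ell x_kY_k\mathbf{a}=x_m\mathbf{a}\text{ for some }(x_1,\ldots,x_m)^\top\neq\mathbf{0}\}$, $\hat V(Y)$ is the linear span of $V(Y)$, and $\mathfrak{S}=\{Y\in\mathbb{R}^{n\times n\times\ell}\mid \dim\hat V(Y)=n\}$. *)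

(* Reals are modelled by an arbitrary real field R
   (covers the reals of the paper; the statement is purely linear-algebraic). *)
From HB Require Import structures.
From mathcomp Require Import all_boot all_order all_algebra.
Set Implicit Arguments. Unset Strict Implicit. Unset Printing Implicit Defensive.
Import Order.TTheory GRing.Theory Num.Theory.
Local Open Scope ring_scope.

Section Defs.
Variable R : realFieldType.

(* A tensor Y = (Y_1;...;Y_l) in R^{n x n x l}: l slices, each an n x n matrix.
   Here m = l.+1, so the index "m" of the paper is ord_max in 'I_(l.+1). *)

(* The matrix B = (A D_1; ... ; A D_l) of size (l*n) x p with p = l*n.
   Row index of B is mxvec_index k r = k*n + r  (block k, row r of A D_k),
   and (A D_k)_{r j} = x_{k j} a_{r j}. *)
Definition Bmat (l n : nat) (x : 'M[R]_(l.+1, l * n)) (A : 'M[R]_(n, l * n))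
  : 'M[R]_(l * n) :=
  \matrix_(i < l * n, j < l * n)
     (mxvec (\matrix_(k < l, r < n) (x (widen_ord (leqnSn l) k) j * A r j)))
       0 i.

Definition inM (l n : nat) (Y : 'I_l -> 'M[R]_n) : Prop :=
  exists (x : 'M[R]_(l.+1, l * n)) (A : 'M[R]_(n, l * n)),
    (forall j : 'I_(l * n),
        (\sum_(k < l) x (widen_ord (leqnSn l) k) j *: Y k
           - x ord_max j *: 1%:M) *m col j A = 0)
    /\ Bmat x A \in unitmx.

Definition Vset (l n : nat) (Y : 'I_l -> 'M[R]_n) (a : 'cV[R]_n) : Prop :=
  exists z : 'cV[R]_(l.+1), z != 0 /\
    \sum_(k < l) z (widen_ord (leqnSn l) k) 0 *: (Y k *m a) = z ord_max 0 *: a.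

(* dim of the linear span of a set P of vectors in R^n equals d:
   the maximal rank of a finite family of elements of P is d. *)
Definition dim_span (n : nat) (P : 'cV[R]_n -> Prop) (d : nat) : Prop :=
  (exists (k : nat) (M : 'M[R]_(n, k)), (forall i, P (col i M)) /\ \rank M = d)
  /\ (forall (k : nat) (M : 'M[R]_(n, k)), (forall i, P (col i M)) -> (\rank M <= d)%N).

Definition inS (l n : nat) (Y : 'I_l -> 'M[R]_n) : Prop :=
  dim_span (Vset Y) n.

End Defs.

From Pilot Require Import Defs.
From HB Require Import structures.
From mathcomp Require Import all_boot all_order all_algebra.
Set Implicit Arguments. Unset Strict Implicit. Unset Printing Implicit Defensive.
Import Order.TTheory GRing.Theory Num.Theory.
Local Open Scope ring_scope.

(* Let Y ∈ M, witnessed by coefficients x (an (l+1) x p matrix) and vectors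
   A = (a_1, ..., a_p) with B = (A D_1; ...; A D_l) invertible.
   1. Every column a_j lies in V(Y): the j-th column of x is a nonzero
      witness, because a zero column of x would give a zero column of B.
   2. B = sum_k E_k (A D_k), where E_k places an n-row block at block row k,
      so by subadditivity of the rank, l n = rank B <= l rank A.
   Hence rank A = n: the columns of A are n independent elements of V(Y),
   and since no family in R^n has rank above n, dim span V(Y) = n. *)

Section RankSubadditivity.
Variable F : fieldType.

Lemma mxrank_addmx_le (m n : nat) (A B : 'M[F]_(m, n)) :
  (\rank (A + B)%R <= \rank A + \rank B)%N.
Proof.
have [adds_le _] := mxrank_adds_leqif A B.
exact: leq_trans (mxrankS (addmx_sub_adds (submx_refl A) (submx_refl B))) adds_le.
Qed.

Lemma mxrank_summx_le (m n l : nat) (G : 'I_l -> 'M[F]_(m, n)) :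
  (\rank (\sum_(k < l) G k)%R <= \sum_(k < l) \rank (G k))%N.
Proof.
apply: (big_ind2 (fun (M : 'M[F]_(m, n)) d => \rank M <= d)%N).
- by rewrite mxrank0.
- by move=> M1 M2 d1 d2 le1 le2; exact: leq_trans (mxrank_addmx_le _ _) (leq_add le1 le2).
- by [].
Qed.

End RankSubadditivity.

Section LinearAlgebraFacts.
Variable R : realFieldType.

Lemma dim_span_full (n k : nat) (P : 'cV[R]_n -> Prop) (M : 'M[R]_(n, k)) :
  (forall i, P (col i M)) -> (n <= \rank M)%N -> Defs.dim_span P n.
Proof.
move=> PM rankM; split; last by move=> k' M' _; exact: rank_leq_row.
by exists k, M; split=> //; apply/eqP; rewrite eqn_leq rank_leq_row.
Qed.

Variables l n p : nat.

Lemma Vset_of_kernel (Y : 'I_l -> 'M[R]_n) (x : 'M[R]_(l.+1, p)) j a :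
  col j x != 0 ->
  (\sum_(k < l) x (widen_ord (leqnSn l) k) j *: Y k
     - x ord_max j *: 1%:M) *m a = 0 ->
  Vset Y a.
Proof.
move=> xj_neq0; rewrite mulmxBl -scalemxAl mul1mx mulmx_suml => /eqP.
rewrite subr_eq0 => /eqP kerYa; exists (col j x); split=> //.
rewrite !mxE -kerYa; apply: eq_bigr => k _.
by rewrite -scalemxAl mxE.
Qed.

End LinearAlgebraFacts.

Section BlockMatrix.
Variable R : realFieldType.
Variables l n : nat.

(* E_k : the (l n) x n matrix inserting an n-vector as block row k. *)
Definition block_embed (k : 'I_l) : 'M[R]_(l * n, n) :=
  \matrix_(i, s) (mxvec (delta_mx k s : 'M[R]_(l, n)) 0 i).

Lemma Bmat_sum (x : 'M[R]_(l.+1, l * n)) (A : 'M[R]_(n, l * n)) :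
  Bmat x A =
  \sum_(k < l) block_embed k *m (A *m diag_mx (row (widen_ord (leqnSn l) k) x)).
Proof.
apply/matrixP => i j; rewrite !mxE summxE.
case/mxvec_indexP: i => k' r'; rewrite mxvecE mxE.
rewrite (bigD1 k') //= big1 => [|k neq_k]; last first.
  rewrite !mxE big1 // => s _.
  by rewrite !mxE mxvecE mxE eq_sym (negbTE neq_k) mul0r.
rewrite addr0 !mxE (bigD1 r') //= big1 => [|s neq_s]; last first.
  by rewrite !mxE mxvecE mxE eq_sym (negbTE neq_s) andbF mul0r.
rewrite addr0 !mxE mxvecE mxE !eqxx /= mul1r.
rewrite (bigD1 j) //= big1 => [|t neq_t]; last first.
  by rewrite !mxE (negbTE neq_t) mulr0n mulr0.
by rewrite addr0 !mxE eqxx mulr1n mulrC.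
Qed.

(* Each of the l summands of B has rank at most rank A. *)
Lemma rank_Bmat_le (x : 'M[R]_(l.+1, l * n)) (A : 'M[R]_(n, l * n)) :
  (\rank (Bmat x A) <= l * \rank A)%N.
Proof.
rewrite Bmat_sum; apply: leq_trans (mxrank_summx_le _) _.
rewrite -[X in (_ <= X * _)%N](card_ord l) -sum_nat_const.
apply: leq_sum => k _.
exact: leq_trans (mxrankM_maxr _ _) (mxrankM_maxl _ _).
Qed.

(* A zero column j of x gives a zero column j of B, so B invertible forces
   every column of x to be nonzero. *)
Lemma Bmat_unit_col_neq0 (x : 'M[R]_(l.+1, l * n)) (A : 'M[R]_(n, l * n)) j :
  Bmat x A \in unitmx -> col j x != 0.
Proof.
move=> Bunit; apply/eqP => xj0.
have Bej0 : Bmat x A *m delta_mx j (0 : 'I_1) = 0.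
  apply/matrixP => i c; rewrite !mxE (bigD1 j) //= big1 => [|t neq_t]; last first.
    by rewrite !mxE (negbTE neq_t) mulr0.
  case/mxvec_indexP: i => k r; rewrite !mxE mxvecE mxE.
  move/matrixP: xj0 => /(_ (widen_ord (leqnSn l) k) 0).
  by rewrite !mxE => ->; rewrite !mul0r add0r.
have := mulKmx Bunit (delta_mx j (0 : 'I_1)).
rewrite Bej0 mulmx0 => /matrixP /(_ j 0).
by rewrite !mxE !eqxx => /eqP; rewrite eq_sym oner_eq0.
Qed.

End BlockMatrix.

Theorem mainTheorem5 (R : realFieldType) (m n : nat) :
  (3 <= m)%N -> (m <= n)%N ->
  forall Y : 'I_(m.-1) -> 'M[R]_n,
    @inM R m.-1 n Y -> @inS R m.-1 n Y.
Proof.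
move=> m_ge3 _ Y [x [A [kerA Bunit]]].
have l_gt0 : (0 < m.-1)%N by rewrite -subn1 subn_gt0 (leq_trans _ m_ge3).
apply: (dim_span_full (M := A)).
- by move=> j; exact: Vset_of_kernel (Bmat_unit_col_neq0 j Bunit) (kerA j).
- rewrite -(leq_pmul2l l_gt0) -{1}(mxrank_unit Bunit).
  exact: rank_Bmat_le.
Qed.
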